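(* Assume $\sigma<2\phi(0)$. Then there exists a unique $\delta^\ast\in(\delta_{\mathrm{th}},b)$ with $$\frac{\sigma}{\phi\left(\Phi^{-1}(q(\delta^\ast))\right)}\cdot\frac{e^b-e^{b-\delta^\ast}}{e^b-1}=1,$$ and $\delta^\ast$ is the unique maximizer of $G_\varphi(\delta)=\varphi(\delta)(e^\delta-1)$ over $[\delta_{\mathrm{th}},b)$. Consequently, if $\delta_{\mathrm{th}}<\delta_\beta<\delta^\ast$, then $\delta^\ast$ is the unique maximizer of the governance objective $G$ over $(0,b)$.
   Context: Parameters: $N>0$, $\sigma>0$, $b>0$, $\beta>0$. $\Phi$ and $\phi$ denote the standard normal cdf and pdf. For $\delta\in(0,b)$ let $q(\delta)=\frac{e^{b-\delta}-1}{e^b-1}\in(0,1)$ and $\varphi(\delta)=N\exp\!\left[\sigma\,\Phi^{-1}(q(\delta))-\delta-\frac{\sigma^2}{2}\right]$. Let $\delta_{\mathrm{th}}=b-\log\left(\frac{e^b+1}{2}\right)$. Let $\delta_\beta\in(0,b)$ be the unique point with $\varphi(\delta_\beta)=\beta N$ ($\varphi$ is strictly decreasing from $+\infty$ to $0$ on $(0,b)$). Let $F^\ast(\delta)=\min(\varphi(\delta),\beta N)$ and the governance objective $G(\delta)=F^\ast(\delta)(e^\delta-1)$. *)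

From Stdlib Require Import Reals ClassicalEpsilon.
From Coquelicot Require Import Coquelicot.
Open Scope R_scope.

Definition phi (x : R) : R := exp (- x ^ 2 / 2) / sqrt (2 * PI).

Definition Phi (x : R) : R := RInt_gen phi (Rbar_locally m_infty) (at_point x).

(* inverse of Phi: some x with Phi x = p (unique for p in (0,1)) *)
Definition Phiinv (p : R) : R :=
  epsilon (inhabits 0) (fun x => Phi x = p).

Definition q (b d : R) : R := (exp (b - d) - 1) / (exp b - 1).

Definition varphi (N sigma b d : R) : R :=
  N * exp (sigma * Phiinv (q b d) - d - sigma ^ 2 / 2).

Definition delta_th (b : R) : R := b - ln ((exp b + 1) / 2).

Definition Fstar (N sigma b beta d : R) : R := Rmin (varphi N sigma b d) (beta * N).

Definition G (N sigma b beta d : R) : R := Fstar N sigma b beta d * (exp d - 1).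

Definition Gvarphi (N sigma b d : R) : R := varphi N sigma b d * (exp d - 1).

Definition foc (sigma b d : R) : Prop :=
  sigma / phi (Phiinv (q b d)) * ((exp b - exp (b - d)) / (exp b - 1)) = 1.

(* Write z(d) = Phiinv (q d) for the normal quantile of q(d).  As d runs over
   [delta_th, b), q(d) decreases from 1/2 to 0, so z(d) decreases bijectively onto
   (-oo, 0].  In this variable
     G_varphi(d) = C * exp (sigma z) (1 - Phi z)       with C > 0, and
     the first-order condition is  k(z) := sigma (1 - Phi z) - phi z = 0.
   Since k'(z) = phi(z) (z - sigma) < 0 for z <= 0 and k(0) = sigma/2 - phi 0 < 0 <
   k(-oo) = sigma, k has a unique root z* < 0, which is the unique maximiser of
   exp (sigma z) (1 - Phi z) (its derivative is exp (sigma z) k(z)); delta* is the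
   point with z(delta* ) = z*.  For the capped objective G, varphi is decreasing, so
   the cap binds exactly below delta_beta and G is maximised at delta* as well. *)

From Stdlib Require Import Reals Lra ClassicalEpsilon.
From Coquelicot Require Import Coquelicot.
Open Scope R_scope.

(** * Elementary analysis *)

Lemma continuous_of_ex_derive (f : R -> R) x : ex_derive f x -> continuous f x.
Proof. apply (@ex_derive_continuous R_AbsRing R_NormedModule). Qed.

Lemma ex_RInt_of_continuous (f : R -> R) a b :
  (forall z, continuous f z) -> ex_RInt f a b.
Proof. intros Hf. apply (@ex_RInt_continuous R_CompleteNormedModule); auto. Qed.

Lemma increasing_of_derive_pos (f df : R -> R) a b : a < b ->
  (forall c, a <= c <= b -> is_derive f c (df c)) ->
  (forall c, a < c < b -> 0 < df c) -> f a < f b.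
Proof.
  intros Hab Hf Hpos.
  destruct (MVT_cor2 f df a b Hab) as [c [Hmvt Hc]].
  - intros c Hc. apply is_derive_Reals, Hf, Hc.
  - specialize (Hpos c Hc). nra.
Qed.

Lemma decreasing_of_derive_neg (f df : R -> R) a b : a < b ->
  (forall c, a <= c <= b -> is_derive f c (df c)) ->
  (forall c, a < c < b -> df c < 0) -> f b < f a.
Proof.
  intros Hab Hf Hneg.
  destruct (MVT_cor2 f df a b Hab) as [c [Hmvt Hc]].
  - intros c Hc. apply is_derive_Reals, Hf, Hc.
  - specialize (Hneg c Hc). nra.
Qed.

Lemma exp_neg_sq_small c : 0 < c ->
  exists M, 0 <= M /\ forall y, M < y -> exp (- (y * y)) < c.
Proof.
  intros Hc. set (M := sqrt (Rabs (ln c))).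
  assert (HM : 0 <= M) by apply sqrt_pos.
  assert (HM2 : M * M = Rabs (ln c)) by (apply sqrt_sqrt, Rabs_pos).
  exists M. split; [exact HM|]. intros y Hy.
  rewrite <- (exp_ln c Hc). apply exp_increasing.
  pose proof (Rle_abs (- ln c)) as Habs. rewrite Rabs_Ropp in Habs. nra.
Qed.

(** * The Gaussian integral

   With E(y) = int_0^y exp(-t^2) dt and
   H(y) = int_0^1 exp(-y^2 (1+t^2)) / (1+t^2) dt, the derivative of E^2 + H
   vanishes, so E(y)^2 = H(0) - H(y) = pi/4 - H(y).  Since 0 <= H(y) <= exp(-y^2),
   E(y) tends to sqrt(pi)/2. *)

Definition gauss (t : R) : R := exp (- (t * t)).

Definition gauss_int (y : R) : R := RInt gauss 0 y.

Definition gauss_aux_integrand (y t : R) : R :=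
  exp (- (y * y) * (1 + t * t)) / (1 + t * t).

Definition gauss_aux (y : R) : R := RInt (gauss_aux_integrand y) 0 1.

Lemma one_plus_sq_pos t : 0 < 1 + t * t.
Proof. nra. Qed.

Lemma gauss_continuous x : continuous gauss x.
Proof. apply continuous_of_ex_derive. unfold gauss; auto_derive; auto. Qed.

Lemma gauss_int_derive y : is_derive gauss_int y (gauss y).
Proof.
  apply (@is_derive_RInt R_CompleteNormedModule gauss gauss_int 0 y).
  - apply filter_forall. intros z.
    apply (@RInt_correct R_CompleteNormedModule), ex_RInt_of_continuous, gauss_continuous.
  - apply gauss_continuous.
Qed.

Lemma gauss_aux_integrand_derive u t :
  is_derive (fun u => gauss_aux_integrand u t) u (-2 * u * exp (- (u * u) * (1 + t * t))).
Proof.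
  pose proof (one_plus_sq_pos t).
  unfold gauss_aux_integrand. auto_derive; [lra|]. field. lra.
Qed.

Lemma gauss_aux_integrand_continuous y t : continuous (gauss_aux_integrand y) t.
Proof.
  apply continuous_of_ex_derive. unfold gauss_aux_integrand. auto_derive.
  pose proof (one_plus_sq_pos t); lra.
Qed.

(* Joint continuity of the y-derivative, needed to differentiate under the integral. *)
Lemma gauss_aux_integrand_derive_continuous x t :
  continuity_2d_pt (fun u v => Derive (fun z => gauss_aux_integrand z v) u) x t.
Proof.
  apply continuity_2d_pt_ext with (f := fun u v => -2 * u * exp (- (u * u) * (1 + v * v))).
  { intros u v. symmetry. apply is_derive_unique, gauss_aux_integrand_derive. }
  apply continuity_2d_pt_mult.
  - apply continuity_2d_pt_mult; [apply continuity_2d_pt_const | apply continuity_2d_pt_id1].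
  - apply continuity_1d_2d_pt_comp; [apply derivable_continuous_pt, derivable_pt_exp|].
    apply continuity_2d_pt_mult.
    + apply continuity_2d_pt_opp, continuity_2d_pt_mult; apply continuity_2d_pt_id1.
    + apply continuity_2d_pt_plus; [apply continuity_2d_pt_const|].
      apply continuity_2d_pt_mult; apply continuity_2d_pt_id2.
Qed.

(* H'(y) = -2 exp(-y^2) E(y), via the substitution s = y t. *)
Lemma gauss_aux_derive y : is_derive gauss_aux y (-2 * exp (- (y * y)) * gauss_int y).
Proof.
  assert (Hparam : is_derive gauss_aux y
            (RInt (fun t => Derive (fun u => gauss_aux_integrand u t) y) 0 1)).
  { apply (is_derive_RInt_param gauss_aux_integrand 0 1 y).
    - apply filter_forall. intros x t _. eexists. apply gauss_aux_integrand_derive.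
    - intros t _. apply gauss_aux_integrand_derive_continuous.
    - apply filter_forall. intros x.
      apply ex_RInt_of_continuous, gauss_aux_integrand_continuous. }
  replace (-2 * exp (- (y * y)) * gauss_int y)
    with (RInt (fun t => Derive (fun u => gauss_aux_integrand u t) y) 0 1); [exact Hparam|].
  rewrite (RInt_ext _ (fun t => scal (-2 * exp (- (y * y))) (scal y (gauss (y * t + 0))))).
  2:{ intros x _. erewrite is_derive_unique; [|apply gauss_aux_integrand_derive].
      unfold scal; simpl; unfold mult; simpl; unfold gauss.
      replace (- (y * y) * (1 + x * x)) with (- (y * y) + - ((y * x + 0) * (y * x + 0)))
        by ring.
      rewrite exp_plus. ring. }
  rewrite (@RInt_scal R_CompleteNormedModule).
  2:{ apply ex_RInt_of_continuous. intros z. apply continuous_of_ex_derive.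
      unfold scal; simpl; unfold mult; simpl; unfold gauss. auto_derive; auto. }
  rewrite (@RInt_comp_lin R_CompleteNormedModule);
    [|apply ex_RInt_of_continuous, gauss_continuous].
  unfold gauss_int, scal; simpl; unfold mult; simpl. f_equal. f_equal; ring.
Qed.

Lemma gauss_energy_const y :
  gauss_int y * gauss_int y + gauss_aux y = gauss_int 0 * gauss_int 0 + gauss_aux 0.
Proof.
  assert (Hzero : forall x, is_derive (fun y => gauss_int y * gauss_int y + gauss_aux y) x 0).
  { intros x.
    assert (Hsq := @is_derive_mult R_AbsRing gauss_int gauss_int x _ _
                     (gauss_int_derive x) (gauss_int_derive x) (fun n m => Rmult_comm n m)).
    assert (Hsum := @is_derive_plus R_AbsRing R_NormedModule _ gauss_aux x _ _
                      Hsq (gauss_aux_derive x)).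
    replace 0 with (plus (plus (mult (gauss x) (gauss_int x)) (mult (gauss_int x) (gauss x)))
                         (-2 * exp (- (x * x)) * gauss_int x)); [exact Hsum|].
    unfold plus, mult; simpl; unfold gauss. ring. }
  pose proof (is_RInt_derive (fun y => gauss_int y * gauss_int y + gauss_aux y)
                (fun _ => 0) 0 y (fun x _ => Hzero x) (fun x _ => continuous_const 0 x)) as Hint.
  apply is_RInt_unique in Hint. rewrite RInt_const in Hint.
  unfold scal, minus, plus, opp in Hint; simpl in Hint; unfold mult in Hint; simpl in Hint.
  lra.
Qed.

Lemma gauss_int_0 : gauss_int 0 = 0.
Proof. unfold gauss_int. rewrite RInt_point. reflexivity. Qed.

(* H(0) = int_0^1 dt / (1 + t^2) = atan 1 = pi / 4. *)
Lemma gauss_aux_0 : gauss_aux 0 = PI / 4.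
Proof.
  unfold gauss_aux. rewrite <- atan_1.
  rewrite (RInt_ext _ (fun t => / (1 + t ^ 2))).
  2:{ intros x _. unfold gauss_aux_integrand.
      replace (- (0 * 0) * (1 + x * x)) with 0 by ring. rewrite exp_0. simpl.
      pose proof (one_plus_sq_pos x). field. lra. }
  rewrite (is_RInt_unique _ 0 1 (minus (atan 1) (atan 0))).
  - rewrite atan_0. unfold minus, plus, opp; simpl. ring.
  - apply (@is_RInt_derive R_CompleteNormedModule).
    + intros x _. apply is_derive_Reals, derivable_pt_lim_atan.
    + intros x _. apply continuous_of_ex_derive. auto_derive.
      pose proof (one_plus_sq_pos x). simpl in *. nra.
Qed.

Lemma gauss_aux_bound y : 0 <= gauss_aux y <= exp (- (y * y)).
Proof.
  assert (Hex : ex_RInt (gauss_aux_integrand y) 0 1)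
    by (apply ex_RInt_of_continuous, gauss_aux_integrand_continuous).
  assert (Hpt : forall t, 0 < gauss_aux_integrand y t <= exp (- (y * y))).
  { intros t. unfold gauss_aux_integrand. pose proof (one_plus_sq_pos t).
    pose proof (exp_pos (- (y * y) * (1 + t * t))).
    assert (Hexp : exp (- (y * y) * (1 + t * t)) <= exp (- (y * y))).
    { destruct (Req_dec (- (y * y) * (1 + t * t)) (- (y * y))) as [E|E];
        [rewrite E; lra|]. apply Rlt_le, exp_increasing. nra. }
    split; [apply Rdiv_lt_0_compat; lra|].
    apply Rle_trans with (exp (- (y * y) * (1 + t * t))); [|exact Hexp].
    apply Rmult_le_reg_r with (1 + t * t); [lra|].
    unfold Rdiv. rewrite Rmult_assoc, Rinv_l by lra. nra. }
  split.
  - apply RInt_ge_0; [lra|exact Hex|]. intros t _. apply Rlt_le, Hpt.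
  - replace (exp (- (y * y))) with (RInt (fun _ => exp (- (y * y))) 0 1).
    2:{ rewrite RInt_const. unfold scal; simpl; unfold mult; simpl. ring. }
    apply RInt_le; [lra|exact Hex|apply ex_RInt_const|]. intros t _. apply Hpt.
Qed.

Lemma gauss_int_nonneg y : 0 <= y -> 0 <= gauss_int y.
Proof.
  intros Hy. apply RInt_ge_0; [exact Hy|apply ex_RInt_of_continuous, gauss_continuous|].
  intros t _. apply Rlt_le, exp_pos.
Qed.

Lemma gauss_int_limit eps : 0 < eps ->
  exists M, forall y, M < y -> Rabs (gauss_int y - sqrt PI / 2) < eps.
Proof.
  intros He. set (s := sqrt PI / 2).
  assert (Hs : 0 < s) by (unfold s; pose proof (sqrt_lt_R0 PI PI_RGT_0); lra).
  assert (Hs2 : s * s = PI / 4).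
  { unfold s. replace (sqrt PI / 2 * (sqrt PI / 2)) with (sqrt PI * sqrt PI / 4) by field.
    rewrite sqrt_sqrt; [lra|pose proof PI_RGT_0; lra]. }
  destruct (exp_neg_sq_small (eps * s)) as [M [HM0 HM]]; [nra|].
  exists M. intros y Hy.
  pose proof (gauss_int_nonneg y ltac:(lra)) as HE.
  pose proof (gauss_energy_const y) as Henergy.
  rewrite gauss_int_0, gauss_aux_0 in Henergy.
  pose proof (gauss_aux_bound y) as HH. pose proof (HM y Hy) as Hsmall.
  (* |E - s| (E + s) = s^2 - E^2 = H(y) *)
  assert (Hfactor : Rabs (gauss_int y - s) * (gauss_int y + s) = gauss_aux y).
  { rewrite <- (Rabs_pos_eq (gauss_int y + s)) by lra. rewrite <- Rabs_mult.
    replace ((gauss_int y - s) * (gauss_int y + s)) with (- gauss_aux y) by nra.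
    rewrite Rabs_Ropp. apply Rabs_pos_eq; lra. }
  pose proof (Rabs_pos (gauss_int y - s)). nra.
Qed.

(** * The standard normal distribution *)

Lemma sqrt_2PI_pos : 0 < sqrt (2 * PI).
Proof. apply sqrt_lt_R0. pose proof PI_RGT_0. lra. Qed.

Lemma phi_pos x : 0 < phi x.
Proof. apply Rdiv_lt_0_compat; [apply exp_pos|apply sqrt_2PI_pos]. Qed.

Lemma phi_derive x : is_derive phi x (- x * phi x).
Proof.
  pose proof sqrt_2PI_pos. unfold phi. auto_derive; [lra|].
  replace (exp (- (x * (x * 1)) * / 2)) with (exp (- x ^ 2 / 2)) by (f_equal; simpl; field).
  field. lra.
Qed.

Lemma phi_continuous x : continuous phi x.
Proof. apply continuous_of_ex_derive. eexists. apply phi_derive. Qed.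

Lemma phi_ex_RInt a b : ex_RInt phi a b.
Proof. apply ex_RInt_of_continuous, phi_continuous. Qed.

Lemma phi_le_exp y : phi y <= exp (- y ^ 2 / 2).
Proof.
  unfold phi. pose proof (exp_pos (- y ^ 2 / 2)).
  assert (H1 : 1 <= sqrt (2 * PI)).
  { rewrite <- sqrt_1. apply sqrt_le_1_alt. pose proof PI2_1. lra. }
  apply Rmult_le_reg_r with (sqrt (2 * PI)); [lra|].
  unfold Rdiv. rewrite Rmult_assoc, Rinv_l by lra. nra.
Qed.

(* The left half of the bell curve, rescaled to the Gaussian integral by t = -sqrt 2 s. *)
Lemma RInt_phi_to_0 a : RInt phi a 0 = gauss_int (- a / sqrt 2) / sqrt PI.
Proof.
  set (r := sqrt 2). assert (Hr : 0 < r) by (apply sqrt_lt_R0; lra).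
  assert (Hr2 : r * r = 2) by (apply sqrt_sqrt; lra).
  assert (Hp : 0 < sqrt PI) by apply (sqrt_lt_R0 _ PI_RGT_0).
  assert (H2PI : sqrt (2 * PI) = r * sqrt PI) by (apply sqrt_mult; pose proof PI_RGT_0; lra).
  rewrite (RInt_ext _ (fun t => scal (- r / sqrt (2 * PI))
                                     (scal (- / r) (gauss (- / r * t + 0))))).
  2:{ intros t _. unfold phi.
      replace (- t ^ 2 / 2) with (- ((- / r * t + 0) * (- / r * t + 0)))
        by (field_simplify; [replace (r ^ 2) with 2 by (simpl; lra)|]; lra).
      unfold gauss, scal; simpl; unfold mult; simpl.
      rewrite H2PI. field. split; lra. }
  rewrite (@RInt_scal R_CompleteNormedModule).
  2:{ apply ex_RInt_of_continuous. intros z. apply continuous_of_ex_derive.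
      unfold scal; simpl; unfold mult; simpl; unfold gauss. auto_derive; auto. }
  rewrite (@RInt_comp_lin R_CompleteNormedModule);
    [|apply ex_RInt_of_continuous, gauss_continuous].
  unfold scal; simpl; unfold mult; simpl.
  replace (- / r * 0 + 0) with 0 by ring.
  rewrite <- (@opp_RInt_swap R_CompleteNormedModule) by
    apply ex_RInt_of_continuous, gauss_continuous.
  unfold gauss_int, opp; simpl. rewrite H2PI.
  replace (- / r * a + 0) with (- a / r) by (field; lra).
  field. split; lra.
Qed.

Lemma RInt_phi_left_limit eps : 0 < eps ->
  exists M, forall a, a < M -> Rabs (RInt phi a 0 - 1 / 2) < eps.
Proof.
  intros He.
  set (r := sqrt 2). assert (Hr : 0 < r) by (apply sqrt_lt_R0; lra).
  assert (Hp : 0 < sqrt PI) by apply (sqrt_lt_R0 _ PI_RGT_0).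
  destruct (gauss_int_limit (eps * sqrt PI)) as [M HM]; [nra|].
  exists (- r * M). intros a Ha. rewrite RInt_phi_to_0. fold r.
  assert (HaM : M < - a / r).
  { apply Rmult_lt_reg_r with r; [exact Hr|].
    unfold Rdiv. rewrite Rmult_assoc, Rinv_l; lra. }
  specialize (HM _ HaM).
  replace (gauss_int (- a / r) / sqrt PI - 1 / 2)
    with ((gauss_int (- a / r) - sqrt PI / 2) / sqrt PI) by (field; lra).
  unfold Rdiv. rewrite Rabs_mult, (Rabs_pos_eq (/ sqrt PI))
    by (apply Rlt_le, Rinv_0_lt_compat; exact Hp).
  apply Rmult_lt_reg_r with (sqrt PI); [exact Hp|].
  rewrite Rmult_assoc, Rinv_l; lra.
Qed.

Lemma is_RInt_gen_of_left_limit (f : R -> R) x l : (forall z, continuous f z) ->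
  (forall eps, 0 < eps -> exists M, forall a, a < M -> Rabs (RInt f a x - l) < eps) ->
  is_RInt_gen f (Rbar_locally m_infty) (at_point x) l.
Proof.
  intros Hc Hl P [eps HP].
  destruct (Hl eps (cond_pos eps)) as [M HM].
  apply Filter_prod with (Q := fun a => a < M) (R := fun b => b = x).
  - exists M; auto.
  - reflexivity.
  - intros a b Ha Hb. subst b. exists (RInt f a x). split.
    + apply (@RInt_correct R_CompleteNormedModule), ex_RInt_of_continuous, Hc.
    + apply HP. apply HM, Ha.
Qed.

Lemma Phi_from_0 x : Phi x = 1 / 2 + RInt phi 0 x.
Proof.
  unfold Phi. apply is_RInt_gen_unique, is_RInt_gen_of_left_limit; [apply phi_continuous|].
  intros eps He. destruct (RInt_phi_left_limit eps He) as [M HM]. exists M. intros a Ha.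
  rewrite <- (@RInt_Chasles R_CompleteNormedModule phi a 0 x) by apply phi_ex_RInt.
  unfold plus; simpl.
  replace (RInt phi a 0 + RInt phi 0 x - (1 / 2 + RInt phi 0 x)) with (RInt phi a 0 - 1 / 2)
    by ring.
  apply HM, Ha.
Qed.

Lemma Phi_derive x : is_derive Phi x (phi x).
Proof.
  apply (@is_derive_ext R_AbsRing R_NormedModule (fun x => 1 / 2 + RInt phi 0 x)).
  { intros t. symmetry. apply Phi_from_0. }
  replace (phi x) with (plus 0 (phi x)) by (unfold plus; simpl; ring).
  apply (@is_derive_plus R_AbsRing R_NormedModule).
  - apply (@is_derive_const R_AbsRing R_NormedModule).
  - apply (@is_derive_RInt R_CompleteNormedModule phi _ 0 x); [|apply phi_continuous].
    apply filter_forall. intros c. apply (@RInt_correct R_CompleteNormedModule), phi_ex_RInt.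
Qed.

Lemma Phi_0 : Phi 0 = 1 / 2.
Proof. rewrite Phi_from_0, RInt_point. unfold zero; simpl. ring. Qed.

Lemma Phi_increasing x y : x < y -> Phi x < Phi y.
Proof.
  intros Hxy. apply (increasing_of_derive_pos Phi phi x y Hxy).
  - intros c _. apply Phi_derive.
  - intros c _. apply phi_pos.
Qed.

Lemma Phi_left_limit eps : 0 < eps -> exists M, forall a, a < M -> Rabs (Phi a) < eps.
Proof.
  intros He. destruct (RInt_phi_left_limit eps He) as [M HM]. exists M. intros a Ha.
  specialize (HM a Ha). rewrite Phi_from_0.
  rewrite <- (@opp_RInt_swap R_CompleteNormedModule) by apply phi_ex_RInt.
  unfold opp; simpl.
  replace (1 / 2 + - RInt phi a 0) with (- (RInt phi a 0 - 1 / 2)) by ring.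
  rewrite Rabs_Ropp. exact HM.
Qed.

(* Phi is positive: it exceeds Phi (x - 1) >= lim_{-oo} Phi = 0. *)
Lemma Phi_pos x : 0 < Phi x.
Proof.
  set (c := Phi x - Phi (x - 1)).
  assert (Hc : 0 < c) by (unfold c; pose proof (Phi_increasing (x - 1) x ltac:(lra)); lra).
  destruct (Phi_left_limit c Hc) as [M HM].
  set (a := Rmin M (x - 1) - 1).
  assert (HaM : a < M) by (unfold a; pose proof (Rmin_l M (x - 1)); lra).
  assert (Hax : a < x - 1) by (unfold a; pose proof (Rmin_r M (x - 1)); lra).
  specialize (HM a HaM). pose proof (Phi_increasing a (x - 1) Hax).
  pose proof (Rle_abs (- Phi a)) as Habs. rewrite Rabs_Ropp in Habs. unfold c in *. lra.
Qed.

Lemma Phiinv_spec p : 0 < p <= 1 / 2 -> Phi (Phiinv p) = p /\ Phiinv p <= 0.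
Proof.
  intros Hp.
  assert (Hex : exists x, Phi x = p).
  { destruct (Req_dec p (1 / 2)) as [E|E]; [exists 0; rewrite Phi_0; auto|].
    destruct (Phi_left_limit p ltac:(lra)) as [M HM].
    set (a := Rmin M 0 - 1).
    assert (HaM : a < M) by (unfold a; pose proof (Rmin_l M 0); lra).
    assert (Ha0 : a < 0) by (unfold a; pose proof (Rmin_r M 0); lra).
    specialize (HM a HaM). pose proof (Rle_abs (Phi a)).
    destruct (IVT (fun x => Phi x - p) a 0) as [z [_ Hz]].
    - intros z. apply (proj2 (continuity_pt_filterlim _ _)).
      apply (continuous_of_ex_derive (fun x => Phi x - p)).
      auto_derive. eexists. apply Phi_derive.
    - exact Ha0.
    - lra.
    - rewrite Phi_0. lra.
    - exists z. lra. }
  pose proof (epsilon_spec (inhabits 0) (fun x => Phi x = p) Hex) as Hinv.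
  fold (Phiinv p) in Hinv. split; [exact Hinv|].
  destruct (Rle_or_lt (Phiinv p) 0) as [L|L]; [exact L|].
  apply Phi_increasing in L. rewrite Phi_0 in L. lra.
Qed.

(** * The Mills-ratio gap and the tilted survival function *)

Definition mills_gap (s x : R) : R := s * (1 - Phi x) - phi x.

Definition tilted_survival (s x : R) : R := exp (s * x) * (1 - Phi x).

(* Rewriting forms of the two derivatives, for use after auto_derive. *)
Lemma Derive_Phi x : Derive Phi x = phi x.
Proof. apply is_derive_unique, Phi_derive. Qed.

Lemma Derive_phi x : Derive phi x = - x * phi x.
Proof. apply is_derive_unique, phi_derive. Qed.

Lemma mills_gap_derive s x : is_derive (mills_gap s) x (phi x * (x - s)).
Proof.
  unfold mills_gap. auto_derive.
  - split; [eexists; apply Phi_derive|]. split; [eexists; apply phi_derive|exact I].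
  - rewrite Derive_Phi, Derive_phi. ring.
Qed.

Lemma tilted_survival_derive s x :
  is_derive (tilted_survival s) x (exp (s * x) * mills_gap s x).
Proof.
  unfold tilted_survival, mills_gap. auto_derive.
  - eexists; apply Phi_derive.
  - rewrite Derive_Phi. ring.
Qed.

Lemma mills_gap_decreasing s x y : x < y -> y <= s -> mills_gap s y < mills_gap s x.
Proof.
  intros Hxy Hys. apply (decreasing_of_derive_neg _ (fun c => phi c * (c - s)) x y Hxy).
  - intros c _. apply mills_gap_derive.
  - intros c Hc. pose proof (phi_pos c). nra.
Qed.

Lemma mills_gap_injective s x y : x <= s -> y <= s -> mills_gap s x = mills_gap s y -> x = y.
Proof.
  intros Hx Hy Heq. destruct (Rtotal_order x y) as [L|[E|L]]; [|exact E|].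
  - pose proof (mills_gap_decreasing s x y L Hy). lra.
  - pose proof (mills_gap_decreasing s y x L Hx). lra.
Qed.

(* k_s(0) = s/2 - phi 0 < 0, while k_s(y) -> s > 0 as y -> -oo. *)
Lemma mills_gap_root s : 0 < s -> s < 2 * phi 0 -> exists xs, xs < 0 /\ mills_gap s xs = 0.
Proof.
  intros Hs Hs2.
  destruct (exp_neg_sq_small (s / 2) ltac:(lra)) as [M [HM0 HM]].
  set (y0 := - (2 * (M + 1))).
  assert (Hy0 : y0 < 0) by (unfold y0; lra).
  assert (Hk0 : 0 < mills_gap s y0).
  { unfold mills_gap. pose proof (Phi_increasing y0 0 Hy0) as HPhi. rewrite Phi_0 in HPhi.
    pose proof (phi_le_exp y0).
    assert (exp (- y0 ^ 2 / 2) <= exp (- ((M + 1) * (M + 1)))).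
    { destruct (Req_dec (- y0 ^ 2 / 2) (- ((M + 1) * (M + 1)))) as [E|E]; [rewrite E; lra|].
      apply Rlt_le, exp_increasing. unfold y0. simpl. nra. }
    pose proof (HM (M + 1) ltac:(lra)). nra. }
  assert (Hk1 : mills_gap s 0 < 0) by (unfold mills_gap; rewrite Phi_0; lra).
  destruct (IVT (fun x => - mills_gap s x) y0 0) as [z [[_ Hz] Hroot]].
  - intros z. apply (proj2 (continuity_pt_filterlim _ _)).
    apply (continuous_of_ex_derive (fun x => - mills_gap s x)).
    auto_derive. eexists; apply mills_gap_derive.
  - exact Hy0.
  - lra.
  - lra.
  - exists z. split; [|lra]. destruct Hz as [L|L]; [exact L|]. subst z. lra.
Qed.

Lemma tilted_survival_unique_max s xs x : xs <= s -> mills_gap s xs = 0 ->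
  x <= s -> x <> xs -> tilted_survival s x < tilted_survival s xs.
Proof.
  intros Hxs Hroot Hx Hne.
  destruct (Rtotal_order x xs) as [L|[E|L]]; [| contradiction |].
  - apply (increasing_of_derive_pos _ (fun c => exp (s * c) * mills_gap s c) x xs L).
    + intros c _. apply tilted_survival_derive.
    + intros c Hc. pose proof (mills_gap_decreasing s c xs (proj2 Hc) Hxs).
      pose proof (exp_pos (s * c)). nra.
  - apply (decreasing_of_derive_neg _ (fun c => exp (s * c) * mills_gap s c) xs x L).
    + intros c _. apply tilted_survival_derive.
    + intros c Hc. pose proof (mills_gap_decreasing s xs c (proj1 Hc) ltac:(lra)).
      pose proof (exp_pos (s * c)). nra.
Qed.

(** * Reparametrisation by the normal quantile *)

Definition zscore (b d : R) : R := Phiinv (q b d).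

(* Inverse of d |-> q b d. *)
Definition q_inv (b p : R) : R := b - ln (1 + (exp b - 1) * p).

Lemma exp_gt_1 x : 0 < x -> 1 < exp x.
Proof. intros Hx. rewrite <- exp_0. apply exp_increasing, Hx. Qed.

(* delta_th is the point where q = 1/2. *)
Lemma exp_b_minus_delta_th b : 0 < b -> exp (b - delta_th b) = (exp b + 1) / 2.
Proof.
  intros Hb. unfold delta_th.
  replace (b - (b - ln ((exp b + 1) / 2))) with (ln ((exp b + 1) / 2)) by ring.
  apply exp_ln. pose proof (exp_pos b). lra.
Qed.

Lemma q_decreasing b d1 d2 : 0 < b -> d1 < d2 -> q b d2 < q b d1.
Proof.
  intros Hb Hd. pose proof (exp_gt_1 b Hb). unfold q, Rdiv.
  apply Rmult_lt_compat_r; [apply Rinv_0_lt_compat; lra|].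
  pose proof (exp_increasing (b - d2) (b - d1) ltac:(lra)). lra.
Qed.

(* On [delta_th, b) the level q lies in (0, 1/2], the domain of Phiinv. *)
Lemma q_range b d : 0 < b -> delta_th b <= d < b -> 0 < q b d <= 1 / 2.
Proof.
  intros Hb [Hth Hdb]. pose proof (exp_gt_1 b Hb). pose proof (exp_b_minus_delta_th b Hb).
  assert (Hlow : 1 < exp (b - d)) by (apply exp_gt_1; lra).
  assert (Hup : exp (b - d) <= exp (b - delta_th b)).
  { destruct Hth as [L|E]; [apply Rlt_le, exp_increasing; lra|rewrite E; lra]. }
  unfold q. split; [apply Rdiv_lt_0_compat; lra|].
  apply Rmult_le_reg_r with (exp b - 1); [lra|].
  unfold Rdiv. rewrite Rmult_assoc, Rinv_l; lra.
Qed.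

Lemma zscore_spec b d : 0 < b -> delta_th b <= d < b ->
  Phi (zscore b d) = q b d /\ zscore b d <= 0.
Proof. intros Hb Hd. apply Phiinv_spec, q_range; assumption. Qed.

(* z is strictly decreasing, as q is and Phi is increasing; so z is injective. *)
Lemma zscore_decreasing b d1 d2 : 0 < b -> delta_th b <= d1 -> d1 < d2 -> d2 < b ->
  zscore b d2 < zscore b d1.
Proof.
  intros Hb H1 H12 H2.
  destruct (zscore_spec b d1 Hb ltac:(lra)) as [Hz1 _].
  destruct (zscore_spec b d2 Hb ltac:(lra)) as [Hz2 _].
  pose proof (q_decreasing b d1 d2 Hb H12).
  destruct (Rlt_or_le (zscore b d2) (zscore b d1)) as [L|[L|E]]; [exact L| |].
  - apply Phi_increasing in L. lra.
  - rewrite E in Hz1. lra.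
Qed.

Lemma zscore_injective b d1 d2 : 0 < b -> delta_th b <= d1 < b -> delta_th b <= d2 < b ->
  zscore b d1 = zscore b d2 -> d1 = d2.
Proof.
  intros Hb H1 H2 Heq. destruct (Rtotal_order d1 d2) as [L|[E|L]]; [|exact E|].
  - pose proof (zscore_decreasing b d1 d2 Hb (proj1 H1) L (proj2 H2)). lra.
  - pose proof (zscore_decreasing b d2 d1 Hb (proj1 H2) L (proj2 H1)). lra.
Qed.

Lemma zscore_surjective b x : 0 < b -> x < 0 ->
  exists d, delta_th b < d < b /\ zscore b d = x.
Proof.
  intros Hb Hx. pose proof (exp_gt_1 b Hb) as Heb.
  set (p := Phi x).
  assert (Hp : 0 < p < 1 / 2) by (split; [apply Phi_pos|rewrite <- Phi_0; apply Phi_increasing, Hx]).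
  assert (Hpos : 0 < 1 + (exp b - 1) * p) by nra.
  assert (Hq : q b (q_inv b p) = p).
  { unfold q, q_inv. replace (b - (b - ln (1 + (exp b - 1) * p))) with (ln (1 + (exp b - 1) * p))
      by ring.
    rewrite exp_ln by exact Hpos. field. lra. }
  assert (Hrange : delta_th b < q_inv b p < b).
  { unfold q_inv, delta_th. split.
    - assert (ln (1 + (exp b - 1) * p) < ln ((exp b + 1) / 2)); [|lra].
      apply ln_increasing; [exact Hpos|nra].
    - assert (0 < ln (1 + (exp b - 1) * p)); [|lra].
      rewrite <- ln_1. apply ln_increasing; nra. }
  exists (q_inv b p). split; [exact Hrange|].
  destruct (zscore_spec b (q_inv b p) Hb ltac:(lra)) as [Hz Hz0].
  rewrite Hq in Hz. fold p in Hz.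
  destruct (Rtotal_order (zscore b (q_inv b p)) x) as [L|[E|L]]; [|exact E|];
    apply Phi_increasing in L; fold p in L; lra.
Qed.

(* The positive constant C in G_varphi(d) = C h_sigma(z(d)). *)
Definition Gvarphi_scale (N sigma b : R) : R :=
  N * exp (- (sigma ^ 2 / 2)) * (exp b - 1) / exp b.

Lemma Gvarphi_scale_pos N sigma b : 0 < N -> 0 < b -> 0 < Gvarphi_scale N sigma b.
Proof.
  intros HN Hb. pose proof (exp_gt_1 b Hb). pose proof (exp_pos (- (sigma ^ 2 / 2))).
  unfold Gvarphi_scale. apply Rdiv_lt_0_compat; [|lra].
  apply Rmult_lt_0_compat; [apply Rmult_lt_0_compat|]; lra.
Qed.

(* Since exp (-d) (exp d - 1) = (exp b - 1) (1 - q d) / exp b,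
   G_varphi(d) = C exp (sigma z) (1 - Phi z) with z = z(d). *)
Lemma Gvarphi_tilted N sigma b d : 0 < b -> delta_th b <= d < b ->
  Gvarphi N sigma b d = Gvarphi_scale N sigma b * tilted_survival sigma (zscore b d).
Proof.
  intros Hb Hd. destruct (zscore_spec b d Hb Hd) as [Hz _].
  pose proof (exp_gt_1 b Hb). pose proof (exp_pos b). pose proof (exp_pos d).
  unfold Gvarphi, varphi, Gvarphi_scale, tilted_survival. fold (zscore b d).
  rewrite Hz. unfold q.
  replace (sigma * zscore b d - d - sigma ^ 2 / 2)
    with (sigma * zscore b d + (- d + - (sigma ^ 2 / 2))) by ring.
  replace (b - d) with (b + - d) by ring.
  rewrite !exp_plus, (exp_Ropp d). field. lra.
Qed.

(* The first-order condition: sigma (1 - q) / phi(z) = 1, i.e. k_sigma(z(d)) = 0. *)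
Lemma foc_mills_gap sigma b d : 0 < b -> delta_th b <= d < b ->
  (foc sigma b d <-> mills_gap sigma (zscore b d) = 0).
Proof.
  intros Hb Hd. destruct (zscore_spec b d Hb Hd) as [Hz _].
  unfold foc, mills_gap. fold (zscore b d). rewrite Hz.
  pose proof (exp_gt_1 b Hb).
  replace ((exp b - exp (b - d)) / (exp b - 1)) with (1 - q b d) by (unfold q; field; lra).
  set (z := zscore b d). pose proof (phi_pos z) as Hphi.
  assert (Hmul : sigma * (1 - q b d) = sigma / phi z * (1 - q b d) * phi z) by (field; lra).
  split; intros Heq.
  - rewrite Heq, Rmult_1_l in Hmul. lra.
  - apply Rmult_eq_reg_r with (phi z); [|lra]. rewrite Rmult_1_l. lra.
Qed.

Lemma varphi_pos N sigma b d : 0 < N -> 0 < varphi N sigma b d.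
Proof. intros HN. apply Rmult_lt_0_compat; [exact HN|apply exp_pos]. Qed.

Lemma varphi_decreasing N sigma b d1 d2 : 0 < N -> 0 < sigma -> 0 < b ->
  delta_th b <= d1 -> d1 < d2 -> d2 < b -> varphi N sigma b d2 < varphi N sigma b d1.
Proof.
  intros HN Hs Hb H1 H12 H2. pose proof (zscore_decreasing b d1 d2 Hb H1 H12 H2).
  unfold varphi. fold (zscore b d1) (zscore b d2).
  apply Rmult_lt_compat_l; [exact HN|]. apply exp_increasing. nra.
Qed.

(** * From G_varphi to the governance objective G

   If the cap beta N binds exactly at delta_beta in (delta_th, delta* ), then G equals
   beta N (e^d - 1) below delta_beta, which stays below G_varphi(delta_beta), and G
   equals G_varphi at delta*, since varphi(delta* ) < varphi(delta_beta) = beta N. *)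

Lemma G_unique_max N sigma b beta dstar dbeta : 0 < N -> 0 < sigma -> 0 < b ->
  delta_th b < dstar < b ->
  (forall d, delta_th b <= d < b -> d <> dstar ->
     Gvarphi N sigma b d < Gvarphi N sigma b dstar) ->
  varphi N sigma b dbeta = beta * N -> delta_th b < dbeta < dstar ->
  forall d, 0 < d < b -> d <> dstar -> G N sigma b beta d < G N sigma b beta dstar.
Proof.
  intros HN Hs Hb Hdstar Hmax Hvb Hdb d Hd Hne.
  assert (Hcap : varphi N sigma b dstar < beta * N).
  { rewrite <- Hvb. apply varphi_decreasing; lra. }
  assert (HGstar : G N sigma b beta dstar = Gvarphi N sigma b dstar).
  { unfold G, Gvarphi, Fstar. rewrite Rmin_left; lra. }
  assert (Hed : 0 < exp d - 1) by (apply Rlt_0_minus, exp_gt_1, Hd).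
  rewrite HGstar. destruct (Rlt_or_le d dbeta) as [L|L].
  - assert (HbN : 0 < beta * N) by (rewrite <- Hvb; apply varphi_pos, HN).
    assert (Hcapd : G N sigma b beta d <= beta * N * (exp d - 1)).
    { unfold G, Fstar. apply Rmult_le_compat_r; [lra|apply Rmin_r]. }
    assert (Hmono : beta * N * (exp d - 1) < beta * N * (exp dbeta - 1)).
    { apply Rmult_lt_compat_l; [exact HbN|]. pose proof (exp_increasing _ _ L). lra. }
    assert (Hbeta : Gvarphi N sigma b dbeta < Gvarphi N sigma b dstar)
      by (apply Hmax; lra).
    unfold Gvarphi at 1 in Hbeta. rewrite Hvb in Hbeta. lra.
  - assert (G N sigma b beta d <= Gvarphi N sigma b d).
    { unfold G, Gvarphi, Fstar. apply Rmult_le_compat_r; [lra|apply Rmin_l]. }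
    assert (Gvarphi N sigma b d < Gvarphi N sigma b dstar) by (apply Hmax; [lra|exact Hne]).
    lra.
Qed.

Theorem proposition3 (N sigma b beta : R) :
  0 < N -> 0 < sigma -> 0 < b -> 0 < beta ->
  sigma < 2 * phi 0 ->
  exists dstar : R,
    (delta_th b < dstar < b /\ foc sigma b dstar /\
     (forall d, delta_th b < d < b -> foc sigma b d -> d = dstar)) /\
    (forall d, delta_th b <= d < b -> d <> dstar ->
       Gvarphi N sigma b d < Gvarphi N sigma b dstar) /\
    (forall dbeta, 0 < dbeta < b -> varphi N sigma b dbeta = beta * N ->
       delta_th b < dbeta < dstar ->
       forall d, 0 < d < b -> d <> dstar ->
         G N sigma b beta d < G N sigma b beta dstar).
Proof.
  intros HN Hs Hb _ Hsmall.
  destruct (mills_gap_root sigma Hs Hsmall) as [xs [Hxs Hroot]].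
  destruct (zscore_surjective b xs Hb Hxs) as [dstar [Hrange Hz]].
  assert (Hz_le : forall d, delta_th b <= d < b -> zscore b d <= sigma)
    by (intros d Hd; destruct (zscore_spec b d Hb Hd); lra).
  assert (Hmax : forall d, delta_th b <= d < b -> d <> dstar ->
            Gvarphi N sigma b d < Gvarphi N sigma b dstar).
  { intros d Hd Hne. rewrite !Gvarphi_tilted by (auto; lra). rewrite Hz.
    apply Rmult_lt_compat_l; [apply Gvarphi_scale_pos; assumption|].
    apply tilted_survival_unique_max; [lra|exact Hroot|apply Hz_le, Hd|].
    intros Heq. apply Hne, (zscore_injective b); [exact Hb|exact Hd|lra|congruence]. }
  exists dstar. split; [split; [exact Hrange|split]|split; [exact Hmax|]].
  - apply foc_mills_gap; [exact Hb|lra|]. rewrite Hz. exact Hroot.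
  - intros d Hd Hfoc. apply (zscore_injective b); [exact Hb|lra|lra|]. rewrite Hz.
    apply (mills_gap_injective sigma); [apply Hz_le; lra|lra|].
    rewrite Hroot. apply foc_mills_gap; [exact Hb|lra|exact Hfoc].
  - intros dbeta _ Hvb Hdb.
    exact (G_unique_max N sigma b beta dstar dbeta HN Hs Hb Hrange Hmax Hvb Hdb).
Qed.
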